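(* Let $n$ agents share an additive valuation $v$ and suppose there are $0<L\le R$ with $v(g)\in[L,R]$ for every item $g$. Consider the online algorithm that in each round $t$ outputs $A^t=$ the allocation returned by Algorithm 3 run on $M_t=\{g_1,\dots,g_t\}$. Then every $A^t$ is a contiguous EF1 allocation of $M_t$, and the total number of adjustments is $O\!\left(\frac{R}{L}n^2T\right)$.
   Context: Items $g_1,\dots,g_T$ arrive online on a line. Contiguous allocation: agent $j$ receives the $j$-th block from the left. For a contiguous allocation $A$, $P(A)=(\ell_0,\dots,\ell_n)$ with $\ell_0=0$ and $P_j(A)$ the index of the last item of $A_j$. Leximin allocation: contiguous allocation maximizing the lowest agent value, then the second-lowest, and so on; the leximin$^2$ allocation is the leximin one with lexicographically smallest $P(A)$. Algorithm 3 (input $v$, item line $M$): let $A$ be the contiguous leximin$^2$ allocation of $M$; fix $i\in\arg\min_j v(A_j)$; for $j=1,\dots,i-1$ in order, while agent $i$ envies agent $j$ even up to one item, move the rightmost item of $A_j$ to $A_{j+1}$; then for $j=n,\dots,i+1$ in order, while agent $i$ envies agent $j$ even up to one item, move the leftmost item of $A_j$ to $A_{j-1}$; return $A$. Agent $i$ envies agent $j$ even up to one item if $A_j\neq\emptyset$ and $v(A_i)<v(A_j\setminus\{g\})$ for all $g\in A_j$. EF1: for all $i,j$, $A_j=\emptyset$ or some $g\in A_j$ has $v(A_i)\ge v(A_j\setminus\{g\})$. The number of adjustments is $\sum_{t=1}^{T-1}|\{g\in M_t: g \text{ is assigned to different agents in } A^t, A^{t+1}\}|$. *)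

(* Items are numbered 1,2,...; an allocation of M_t = {g_1..g_t}
   to agents 1..n is contiguous and represented by its cut vector
   P = [:: l_0; l_1; ...; l_n] with l_0 = 0, l_n = t, nondecreasing;
   agent j (1 <= j <= n) receives the items k with l_(j-1) < k <= l_j. *)
From mathcomp Require Import all_boot all_order all_algebra.
From mathcomp Require Import reals.
Set Implicit Arguments. Unset Strict Implicit. Unset Printing Implicit Defensive.
Import Order.TTheory GRing.Theory Num.Theory.
Local Open Scope ring_scope.

Definition cut (P : seq nat) (j : nat) : nat := nth 0%N P j.

Definition block (P : seq nat) (j : nat) : seq nat :=
  iota (cut P j.-1).+1 (cut P j - cut P j.-1).

Definition bval (F : numDomainType) (v : nat -> F) (P : seq nat) (j : nat) : F :=
  \sum_(k <- block P j) v k.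

Definition bval_minus (F : numDomainType) (v : nat -> F) (P : seq nat) (j g : nat) : F :=
  \sum_(k <- block P j | k != g) v k.

Definition is_cuts (n t : nat) (P : seq nat) : Prop :=
  [/\ size P = n.+1, cut P 0 = 0%N, cut P n = t & sorted leq P].

Definition vals (F : numDomainType) (v : nat -> F) (n : nat) (P : seq nat) : seq F :=
  [seq bval v P j | j <- iota 1 n].
Definition sortv (F : numDomainType) (v : nat -> F) (n : nat) (P : seq nat) : seq F :=
  sort <=%R (vals v n P).

Fixpoint lexle (T : eqType) (lt : rel T) (s1 s2 : seq T) : bool :=
  match s1, s2 with
  | x :: s1', y :: s2' => lt x y || ((x == y) && lexle lt s1' s2')
  | _, _ => true
  end.

Definition is_leximin2 (F : realDomainType) (v : nat -> F) (n t : nat) (P : seq nat) : Prop :=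
  is_cuts n t P /\
  forall Q, is_cuts n t Q ->
    lexle <%R (sortv v n Q) (sortv v n P) /\
    (sortv v n Q = sortv v n P -> lexle ltn P Q).

Definition is_min_agent (F : realDomainType) (v : nat -> F) (n : nat) (P : seq nat) (i : nat) : Prop :=
  (1 <= i <= n)%N /\ forall j, (1 <= j <= n)%N -> bval v P i <= bval v P j.

Definition envies1 (F : realDomainType) (v : nat -> F) (P : seq nat) (i j : nat) : bool :=
  (block P j != [::]) && all (fun g => bval v P i < bval_minus v P j g) (block P j).

(* while loop with explicit fuel (fuel t.+1 suffices below, since each iteration
   removes one item from a nonempty block of size <= t) *)
Fixpoint while_loop (fuel : nat) (c : seq nat -> bool) (f : seq nat -> seq nat)
  (s : seq nat) : seq nat :=
  match fuel with
  | 0 => s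
  | k.+1 => if c s then while_loop k c f (f s) else s
  end.

Definition move_right (P : seq nat) (j : nat) : seq nat := set_nth 0%N P j (cut P j).-1.
Definition move_left (P : seq nat) (j : nat) : seq nat := set_nth 0%N P j.-1 (cut P j.-1).+1.

Definition alg3 (F : realDomainType) (v : nat -> F) (n t : nat) (P : seq nat) (i : nat) : seq nat :=
  let P1 := foldl (fun Q j => while_loop t.+1 (fun Q' => envies1 v Q' i j)
                                (fun Q' => move_right Q' j) Q) P (iota 1 i.-1) in
  foldl (fun Q j => while_loop t.+1 (fun Q' => envies1 v Q' i j)
                       (fun Q' => move_left Q' j) Q) P1 (rev (iota i.+1 (n - i))).

Definition EF1 (F : realDomainType) (v : nat -> F) (n : nat) (P : seq nat) : Prop :=
  forall i j, (1 <= i <= n)%N -> (1 <= j <= n)%N ->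
    block P j = [::] \/ exists2 g, g \in block P j & bval_minus v P j g <= bval v P i.

Definition owner (P : seq nat) (g : nat) : nat := find (fun l => g <= l)%N P.

Definition adjustments (T : nat) (A : nat -> seq nat) : nat :=
  (\sum_(1 <= t < T) count (fun g => owner (A t) g != owner (A t.+1) g) (iota 1 t))%N.

(* The block of the minimum agent [i] of the leximin allocation never changes
   during Algorithm 3: a neighbour that is handed an item ends strictly above the
   old minimum, as does the envied agent that loses it, so if the neighbour were
   [i] itself then every agent would be at or strictly above the old minimum with
   fewer agents at it, a leximin improvement.  Hence [v(A_i)] remains the minimum,
   and as [i] finally envies no one up to one item, the output is EF1.

   For the adjustments: in an EF1 allocation with item values in [[L, R]] any two
   agent values differ by at most [R], so the value of the items up to the cut
   [l_j] is within [jR] of [j/n] of the total value.  Two consecutive rounds differ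
   by one item, so each cut moves by at most [3nR/L] positions, and an item
   changes owner only if a cut passes over it; summing over the [n + 1] cuts and
   the [T] rounds gives [6 (R/L) n^2 T]. *)

From mathcomp Require Import all_boot all_order all_algebra.
From mathcomp Require Import reals.
From mathcomp Require Import ring lra zify.

Set Implicit Arguments. Unset Strict Implicit. Unset Printing Implicit Defensive.
Import Order.TTheory GRing.Theory Num.Theory.
Local Open Scope ring_scope.

Section CutVectors.
Variables (n t : nat).

Lemma leq_cut Q a b : is_cuts n t Q -> (a <= b <= n)%N -> (cut Q a <= cut Q b)%N.
Proof.
case=> sz _ _ srt /andP[ab bn].
by apply: (sorted_leq_nth leq_trans leqnn 0 srt) => //; rewrite inE sz; lia.
Qed.

Lemma cut_leq_t Q k : is_cuts n t Q -> (k <= n)%N -> (cut Q k <= t)%N.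
Proof. by move=> cQ kn; have [_ _ <- _] := cQ; apply: (leq_cut cQ); lia. Qed.

Lemma mem_block_cut Q k g : g \in block Q k -> (cut Q k.-1 < g <= cut Q k)%N.
Proof. by rewrite /block mem_iota; lia. Qed.

Lemma size_block Q k : size (block Q k) = (cut Q k - cut Q k.-1)%N.
Proof. exact: size_iota. Qed.

Lemma cut_set_nth Q j y k : cut (set_nth 0%N Q j y) k = if k == j then y else cut Q k.
Proof. exact: nth_set_nth. Qed.

Lemma eq_block Q Q' k :
  cut Q k.-1 = cut Q' k.-1 -> cut Q k = cut Q' k -> block Q k = block Q' k.
Proof. by rewrite /block => -> ->. Qed.

Lemma block_set_nth Q j y k : k.-1 != j -> k != j -> block (set_nth 0%N Q j y) k = block Q k.
Proof. by move=> /negbTE h1 /negbTE h2; apply: eq_block; rewrite cut_set_nth ?h1 ?h2. Qed.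

Lemma is_cuts_set_nth Q j y : is_cuts n t Q -> (0 < j < n)%N ->
  (cut Q j.-1 <= y <= cut Q j.+1)%N -> is_cuts n t (set_nth 0%N Q j y).
Proof.
move=> cQ jn yb; have [sz c0 cn _] := cQ.
have szQ' : size (set_nth 0%N Q j y) = n.+1 by rewrite size_set_nth sz; apply/maxn_idPr; lia.
split => //; rewrite ?cut_set_nth; [by case: ifP => // /eqP; lia|by case: ifP => // /eqP; lia|].
apply/(sortedP 0%N) => k; rewrite szQ' => kn.
have := cut_set_nth Q j y k; have := cut_set_nth Q j y k.+1; rewrite /cut => -> ->.
have ck : (cut Q k <= cut Q k.+1)%N by apply: (leq_cut cQ); lia.
case: eqP => [->|_]; case: eqP => [Ej|_] //.
- by case/andP: yb.
- by move: yb; rewrite -Ej /cut => /andP[].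
Qed.

End CutVectors.

Section BlockValues.
Variables (F : numDomainType) (v : nat -> F).

Lemma bvalE Q k : bval v Q k = \sum_((cut Q k.-1).+1 <= g < (cut Q k).+1) v g.
Proof. by rewrite /bval /block /index_iota subSS. Qed.

Lemma bval_minusE Q k x :
  bval_minus v Q k x = \sum_((cut Q k.-1).+1 <= g < (cut Q k).+1 | g != x) v g.
Proof. by rewrite /bval_minus /block /index_iota subSS. Qed.

Lemma bval_set_nth Q j y k : k.-1 != j -> k != j ->
  bval v (set_nth 0%N Q j y) k = bval v Q k.
Proof. by move=> h1 h2; rewrite /bval block_set_nth. Qed.

Lemma bval_move_right Q j : (0 < j)%N -> (cut Q j.-1 < cut Q j)%N ->
  bval v (move_right Q j) j = bval_minus v Q j (cut Q j).
Proof.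
move=> j0 cj; rewrite bvalE bval_minusE /move_right !cut_set_nth eqxx.
rewrite ifN_eq; last by rewrite neq_ltn prednK ?leqnn.
rewrite prednK; last lia.
rewrite [RHS]big_mkcond [RHS]big_nat_recr /=; last lia.
rewrite eqxx addr0; apply: eq_big_nat => g /andP[_ gj].
by rewrite neq_ltn gj.
Qed.

Lemma bval_move_right_succ Q j : (cut Q j.-1 < cut Q j <= cut Q j.+1)%N ->
  bval v (move_right Q j) j.+1 = v (cut Q j) + bval v Q j.+1.
Proof.
case/andP=> cj cj1; have cj0 := leq_ltn_trans (leq0n _) cj.
rewrite !bvalE succnK /move_right !cut_set_nth eqxx gtn_eqF //.
by rewrite prednK // big_ltn.
Qed.

Lemma bval_move_left Q j : (1 < j)%N -> (cut Q j.-1 < cut Q j)%N ->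
  bval v (move_left Q j) j = bval_minus v Q j (cut Q j.-1).+1.
Proof.
move=> j1 cj; rewrite bvalE bval_minusE /move_left !cut_set_nth eqxx.
rewrite ifN_eq; last by apply/eqP; lia.
rewrite [RHS]big_mkcond [RHS]big_ltn //= eqxx add0r.
by apply: eq_big_nat => g /andP[cg _]; rewrite ifT //; apply/eqP; lia.
Qed.

Lemma bval_move_left_pred Q j : (1 < j)%N -> (cut Q j.-2 <= cut Q j.-1)%N ->
  bval v (move_left Q j) j.-1 = bval v Q j.-1 + v (cut Q j.-1).+1.
Proof.
move=> j1 cj; rewrite !bvalE /move_left !cut_set_nth eqxx.
rewrite ifN_eq; last by apply/eqP; lia.
by rewrite big_nat_recr.
Qed.

Lemma bval_minus_le Q k g : {in block Q k, forall x, 0 <= v x} ->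
  bval_minus v Q k g <= bval v Q k.
Proof.
move=> v_ge0; rewrite /bval_minus /bval [X in _ <= X](bigID (fun x => x != g)) /= lerDl.
by rewrite big_seq_cond sumr_ge0 // => x /andP[/v_ge0].
Qed.

End BlockValues.

Lemma count_lt_sub (T : eqType) (a b : pred T) (s : seq T) :
  {in s, forall x, a x -> b x} -> (exists2 x, x \in s & b x && ~~ a x) ->
  (count a s < count b s)%N.
Proof.
move=> sub_ab [x xs /andP[bx nax]].
rewrite -(size_filter b) -(count_predC a) !count_filter.
have -> : count (predI a b) s = count a s.
  by apply: eq_in_count => y ys /=; case ay: (a y); rewrite //= (sub_ab y ys ay).
rewrite -{1}[count a s]addn0 ltn_add2l -has_count.
by apply/hasP; exists x => //=; rewrite nax.
Qed.

Section Leximin.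
Variable F : realDomainType.

Lemma not_lexle_fewer_minima (m : F) (s s' : seq F) : sorted <=%R s ->
  all (>= m) s -> all (>= m) s' -> size s = size s' ->
  (count (<= m) s' < count (<= m) s)%N -> ~~ lexle <%R s' s.
Proof.
elim: s s' => [|a s IH] [|b s'] //= srt /andP[ma ms] /andP[mb ms'] [sz] cnt.
have a_min := order_path_min le_trans srt.
have am : a = m.
  apply/eqP; rewrite eq_le ma andbT; apply: contraTT cnt => am.
  rewrite (negbTE am) add0n -leqNgt (@eq_in_count _ _ pred0) ?count_pred0 //.
  by move=> x xs /=; apply: contraNF am => xm; apply: le_trans (allP a_min x xs) xm.
subst a; case: (ltrgtP b m) => [bm|//|bm].
- by move: mb; rewrite leNgt bm.
- apply: IH => //; first exact: path_sorted srt.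
  by move: cnt; rewrite bm lexx.
Qed.

Definition bval_above_min (v : nat -> F) n P i Q :=
  forall k, (1 <= k <= n)%N -> bval v Q k = bval v P k \/ bval v P i < bval v Q k.

(* Otherwise fewer agents than in [P] would sit at the minimum value of [P],
   a strict leximin improvement. *)
Lemma leximin_min_agent_maximal (v : nat -> F) n t P Q i :
  is_leximin2 v n t P -> is_min_agent v n P i -> is_cuts n t Q ->
  bval_above_min v n P i Q -> bval v Q i <= bval v P i.
Proof.
move=> [_ lex] [iin imin] cQ above; rewrite leNgt; apply/negP => gt_i.
have [lexQP _] := lex Q cQ.
set m := bval v P i.
have geQ : all (>= m) (vals v n Q).
  apply/allP => x /mapP [k]; rewrite mem_iota => kr ->.
  by case: (above k ltac:(lia)) => [->|/ltW //]; apply: imin; lia.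
have geP : all (>= m) (vals v n P).
  by apply/allP => x /mapP [k]; rewrite mem_iota => kr ->; apply: imin; lia.
have perm_sortv Q' : perm_eq (sortv v n Q') (vals v n Q') := permEl (perm_sort _ _).
apply/negP: lexQP; apply: (@not_lexle_fewer_minima m).
- by apply: sort_sorted => x y; exact: le_total.
- by rewrite (perm_all _ (perm_sortv _)).
- by rewrite (perm_all _ (perm_sortv _)).
- by rewrite !size_sort !size_map.
rewrite !(permP (perm_sortv _)) /vals !count_map.
apply: count_lt_sub.
- move=> k; rewrite mem_iota => kr /=.
  case: (above k ltac:(lia)) => [->|lt le] //.
  by move: (lt_le_trans lt le); rewrite ltxx.
by exists i; rewrite ?mem_iota /= ?lexx -?ltNge //; lia.
Qed.

Lemma above_min_neq (v : nat -> F) n t P Q i k :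
  is_leximin2 v n t P -> is_min_agent v n P i -> is_cuts n t Q ->
  bval_above_min v n P i Q -> bval v P i < bval v Q k -> k != i.
Proof.
move=> lexP iP cQ above; apply: contraTneq => ->.
by rewrite -leNgt (leximin_min_agent_maximal lexP iP cQ above).
Qed.

Lemma bval_above_min_update (v : nat -> F) n P i Q Q' j j' :
  bval_above_min v n P i Q ->
  (forall k, k != j -> k != j' -> bval v Q' k = bval v Q k) ->
  bval v P i < bval v Q' j -> bval v P i < bval v Q' j' -> bval_above_min v n P i Q'.
Proof.
move=> above same ltj ltj' k kn.
have [->|kj] := eqVneq k j; first by right.
have [->|kj'] := eqVneq k j'; first by right.
by rewrite same //; apply: above.
Qed.

End Leximin.

Section Algorithm3.
Variables (F : realDomainType) (v : nat -> F) (n t : nat) (P : seq nat) (i : nat).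
Hypothesis P_leximin : is_leximin2 v n t P.
Hypothesis i_min : is_min_agent v n P i.
Hypothesis v_gt0 : forall g, (1 <= g <= t)%N -> 0 < v g.

Definition alg3_inv Q := [/\ is_cuts n t Q, bval_above_min v n P i Q,
  cut Q i.-1 = cut P i.-1 & cut Q i = cut P i].

Lemma alg3_inv_init : alg3_inv P.
Proof. by case: P_leximin => cP _; split => // k _; left. Qed.

Lemma alg3_inv_bval_min Q : alg3_inv Q -> bval v Q i = bval v P i.
Proof. by case=> _ _ ci1 ci; rewrite /bval (eq_block ci1 ci). Qed.

Lemma alg3_inv_bval_ge Q k : alg3_inv Q -> (1 <= k <= n)%N -> bval v P i <= bval v Q k.
Proof.
have [_ imin] := i_min; case=> _ above _ _ kn.
by case: (above k kn) => [->|/ltW //]; exact: imin.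
Qed.

Lemma envies1_cut_lt Q j : envies1 v Q i j -> (cut Q j.-1 < cut Q j)%N.
Proof. by case/andP; rewrite -size_eq0 size_block; lia. Qed.

Lemma bval_block_gt0 Q k g : alg3_inv Q -> (k <= n)%N -> g \in block Q k -> 0 < v g.
Proof.
case=> cQ _ _ _ kn /mem_block_cut gk; apply: v_gt0.
by have := cut_leq_t cQ kn; lia.
Qed.

Lemma alg3_inv_move_right Q j : alg3_inv Q -> (0 < j < i)%N -> envies1 v Q i j ->
  alg3_inv (move_right Q j) /\ (j.+1 < i)%N.
Proof.
move=> invQ /andP[j0 ji] env; have cj := envies1_cut_lt env.
have [iin _] := i_min; have [cQ above ci1 ci] := invQ.
have cj1 : (cut Q j <= cut Q j.+1)%N by apply: (leq_cut cQ); lia.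
have cj_in : cut Q j \in block Q j by rewrite /block mem_iota; lia.
have cQ' : is_cuts n t (move_right Q j) by apply: is_cuts_set_nth => //; lia.
have lt_j : bval v P i < bval v (move_right Q j) j.
  rewrite bval_move_right // -(alg3_inv_bval_min invQ).
  by case/andP: env => _ /allP; apply.
have lt_j1 : bval v P i < bval v (move_right Q j) j.+1.
  rewrite bval_move_right_succ ?cj //.
  rewrite -[bval v P i]add0r; apply: ltr_leD.
    by apply: (bval_block_gt0 invQ _ cj_in); lia.
  by apply: (alg3_inv_bval_ge invQ); lia.
have above' : bval_above_min v n P i (move_right Q j).
  apply: (bval_above_min_update above _ lt_j lt_j1) => k /eqP kj /eqP kj1.
  by rewrite bval_set_nth //; apply/eqP; lia.
have ji1 := above_min_neq P_leximin i_min cQ' above' lt_j1.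
split; last by rewrite ltn_neqAle ji1 ji.
by split; rewrite // /move_right cut_set_nth ifN_eq //; apply/eqP; lia.
Qed.

Lemma alg3_inv_move_left Q j : alg3_inv Q -> (i < j <= n)%N -> envies1 v Q i j ->
  alg3_inv (move_left Q j) /\ (i < j.-1)%N.
Proof.
move=> invQ /andP[ij jn] env; have cj := envies1_cut_lt env.
have [iin _] := i_min; have [cQ above ci1 ci] := invQ.
have cj2 : (cut Q j.-2 <= cut Q j.-1)%N by apply: (leq_cut cQ); lia.
have cj_in : (cut Q j.-1).+1 \in block Q j by rewrite /block mem_iota; lia.
have cQ' : is_cuts n t (move_left Q j).
  by apply: is_cuts_set_nth => //; rewrite ?prednK; lia.
have lt_j : bval v P i < bval v (move_left Q j) j.
  rewrite bval_move_left //; last lia.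
  rewrite -(alg3_inv_bval_min invQ).
  by case/andP: env => _ /allP; apply.
have lt_j1 : bval v P i < bval v (move_left Q j) j.-1.
  rewrite bval_move_left_pred //; last lia.
  rewrite -[bval v P i]addr0; apply: ler_ltD.
    by apply: (alg3_inv_bval_ge invQ); lia.
  exact: bval_block_gt0 invQ jn cj_in.
have above' : bval_above_min v n P i (move_left Q j).
  apply: (bval_above_min_update above _ lt_j lt_j1) => k /eqP kj /eqP kj1.
  by rewrite bval_set_nth //; apply/eqP; lia.
have ji1 := above_min_neq P_leximin i_min cQ' above' lt_j1.
split; last by move: ji1 => /eqP; lia.
by split; rewrite // /move_left cut_set_nth ifN_eq //; apply/eqP; lia.
Qed.

Lemma envies1_eq_block Q Q' k : block Q i = block Q' i -> block Q k = block Q' k ->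
  envies1 v Q i k = envies1 v Q' i k.
Proof. by rewrite /envies1 /bval_minus /bval => -> ->. Qed.

Lemma alg3_inv_block_i Q : alg3_inv Q -> block Q i = block P i.
Proof. by case=> _ _; apply: eq_block. Qed.

Lemma alg3_inv_size_block Q j : alg3_inv Q -> (j <= n)%N -> (size (block Q j) < t.+1)%N.
Proof. by case=> cQ _ _ _ jn; rewrite size_block ltnS; have := cut_leq_t cQ jn; lia. Qed.

Lemma while_move_right_inv j fuel Q : (0 < j < i)%N -> alg3_inv Q ->
  (size (block Q j) < fuel)%N -> (forall k, (0 < k < j)%N -> ~~ envies1 v Q i k) ->
  let Q' := while_loop fuel (fun Q' => envies1 v Q' i j) (fun Q' => move_right Q' j) Q in
  alg3_inv Q' /\ (forall k, (0 < k <= j)%N -> ~~ envies1 v Q' i k).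
Proof.
move=> jr; elim: fuel Q => [|fuel IH] Q invQ //= szQ no_envy.
case: ifP => [env|no_env]; last first.
  by split=> // k kj; have [->|kj'] := eqVneq k j; [rewrite no_env|apply: no_envy; lia].
have [invQ' _] := alg3_inv_move_right invQ jr env.
have cj := envies1_cut_lt env.
apply: IH => // [|k kj].
- rewrite size_block /move_right !cut_set_nth eqxx ifN_eq; last by apply/eqP; lia.
  by move: szQ; rewrite size_block; lia.
- have same_i : block (move_right Q j) i = block Q i by rewrite !alg3_inv_block_i.
  have same_k : block (move_right Q j) k = block Q k by apply: block_set_nth; apply/eqP; lia.
  by rewrite (envies1_eq_block same_i same_k); apply: no_envy; lia.
Qed.

Lemma while_move_left_inv j fuel Q : (i < j <= n)%N -> alg3_inv Q ->
  (size (block Q j) < fuel)%N ->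
  (forall k, ((0 < k < i) || (j < k <= n))%N -> ~~ envies1 v Q i k) ->
  let Q' := while_loop fuel (fun Q' => envies1 v Q' i j) (fun Q' => move_left Q' j) Q in
  alg3_inv Q' /\ (forall k, ((0 < k < i) || (j <= k <= n))%N -> ~~ envies1 v Q' i k).
Proof.
move=> jr; elim: fuel Q => [|fuel IH] Q invQ //= szQ no_envy.
case: ifP => [env|no_env]; last first.
  by split=> // k kj; have [->|kj'] := eqVneq k j; [rewrite no_env|apply: no_envy; lia].
have [invQ' _] := alg3_inv_move_left invQ jr env.
have cj := envies1_cut_lt env.
apply: IH => // [|k kj].
- rewrite size_block /move_left !cut_set_nth eqxx ifN_eq; last by apply/eqP; lia.
  by move: szQ; rewrite size_block; lia.
- have same_i : block (move_left Q j) i = block Q i by rewrite !alg3_inv_block_i.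
  have same_k : block (move_left Q j) k = block Q k by apply: block_set_nth; apply/eqP; lia.
  by rewrite (envies1_eq_block same_i same_k); apply: no_envy; lia.
Qed.

Lemma foldl_move_right_inv a b Q : (0 < a)%N -> (a + b <= i)%N -> alg3_inv Q ->
  (forall k, (0 < k < a)%N -> ~~ envies1 v Q i k) ->
  let Q' := foldl (fun Q j => while_loop t.+1 (fun Q' => envies1 v Q' i j)
                                (fun Q' => move_right Q' j) Q) Q (iota a b) in
  alg3_inv Q' /\ (forall k, (0 < k < a + b)%N -> ~~ envies1 v Q' i k).
Proof.
have [iin _] := i_min.
elim: b a Q => [|b IH] a Q a0 abi invQ no_envy; first by rewrite addn0.
have [invQ' no_envy'] := @while_move_right_inv a t.+1 Q ltac:(lia) invQ
  (@alg3_inv_size_block Q a invQ ltac:(lia)) no_envy.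
by rewrite -addSnnS; apply: IH => //; lia.
Qed.

Lemma foldl_move_left_inv b Q : (i + b <= n)%N -> alg3_inv Q ->
  (forall k, ((0 < k < i) || (i + b < k <= n))%N -> ~~ envies1 v Q i k) ->
  let Q' := foldl (fun Q j => while_loop t.+1 (fun Q' => envies1 v Q' i j)
                       (fun Q' => move_left Q' j) Q) Q (rev (iota i.+1 b)) in
  alg3_inv Q' /\ (forall k, ((0 < k < i) || (i < k <= n))%N -> ~~ envies1 v Q' i k).
Proof.
have [iin _] := i_min.
elim: b Q => [|b IH] Q bn invQ no_envy; first by split => // k kr; apply: no_envy; lia.
rewrite -[b.+1]addn1 iotaD rev_cat.
have [invQ' no_envy'] := @while_move_left_inv (i.+1 + b) t.+1 Q ltac:(lia) invQ
  (@alg3_inv_size_block Q (i.+1 + b) invQ ltac:(lia)) ltac:(move=> k kr; apply: no_envy; lia).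
by apply: IH => //; lia.
Qed.

Lemma alg3_inv_no_envy : alg3_inv (alg3 v n t P i) /\
  (forall k, (1 <= k <= n)%N -> k != i -> ~~ envies1 v (alg3 v n t P i) i k).
Proof.
have [iin _] := i_min.
have [inv1 no_envy1] := @foldl_move_right_inv 1 i.-1 P isT ltac:(lia) alg3_inv_init
  ltac:(move=> k; lia).
have [inv2 no_envy2] := @foldl_move_left_inv (n - i) _ ltac:(lia) inv1
  ltac:(move=> k kr; apply: no_envy1; lia).
by split => // k kr ki; apply: no_envy2; move/eqP: ki; lia.
Qed.

Lemma alg3_EF1 : is_cuts n t (alg3 v n t P i) /\ EF1 v n (alg3 v n t P i).
Proof.
have [iin _] := i_min; have [invQ no_envy] := alg3_inv_no_envy; have [cQ _ _ _] := invQ.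
split=> // a b ha hb.
have ge_a : bval v (alg3 v n t P i) i <= bval v (alg3 v n t P i) a.
  by rewrite alg3_inv_bval_min //; apply: alg3_inv_bval_ge.
have [->|bi] := eqVneq b i.
  case: (block _ i) => [|g s]; [by left|right; exists g; first exact: mem_head].
  apply: le_trans ge_a; apply: bval_minus_le => x xi.
  by apply/ltW/(bval_block_gt0 invQ _ xi); lia.
have := no_envy b hb bi; rewrite negb_and negbK => /orP[/eqP|/allPn[g gin]]; first by left.
by rewrite -leNgt => le_g; right; exists g => //; apply: le_trans ge_a.
Qed.

End Algorithm3.

Lemma owner_neq_has (Q Q' : seq nat) g : size Q = size Q' -> owner Q g != owner Q' g ->
  has (fun j => (g <= cut Q j) != (g <= cut Q' j))%N (iota 0 (size Q)).
Proof.
rewrite /owner /cut; elim: Q Q' => [|x Q IH] [|y Q'] //= [sz].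
case: (g <= x)%N; case: (g <= y)%N => //= ne.
by rewrite -[1%N]/(1 + 0)%N iotaDl has_map; apply: IH.
Qed.

Lemma count_has_le_sum (T : Type) (s : seq T) (js : seq nat) (q : T -> nat -> bool) :
  (count (fun x => has (q x) js) s <= \sum_(j <- js) count (q^~ j) s)%N.
Proof.
elim: js => [|j js IH]; first by rewrite big_nil; elim: s.
rewrite big_cons; apply: leq_trans (leq_add (leqnn _) IH).
by rewrite -count_predUI leq_addr.
Qed.

Lemma count_iota_between x y t :
  (count (fun g => (g <= x) != (g <= y)) (iota 1 t) <= `|x - y|)%N.
Proof.
rewrite -size_filter.
have /uniq_leq_size : {subset filter (fun g => (g <= x) != (g <= y))%N (iota 1 t) <=
                        iota (minn x y).+1 `|x - y|}.
  move=> g; rewrite mem_filter !mem_iota => /andP[+ _].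
  by case: (leqP g x) => gx; case: (leqP g y) => gy //= _; lia.
by rewrite size_iota; apply; rewrite filter_uniq ?iota_uniq.
Qed.

Lemma owner_changes_le_cut_dist (Q Q' : seq nat) n t :
  size Q = n.+1 -> size Q' = n.+1 ->
  (count (fun g => owner Q g != owner Q' g) (iota 1 t) <=
   \sum_(0 <= j < n.+1) `|cut Q j - cut Q' j|)%N.
Proof.
move=> szQ szQ'; set q := fun g j => ((g <= cut Q j) != (g <= cut Q' j))%N.
apply: leq_trans (leq_trans _ (count_has_le_sum (iota 1 t) (iota 0 n.+1) q)) _.
  apply: sub_count => g ne; rewrite -szQ.
  exact: owner_neq_has (etrans szQ (esym szQ')) ne.
by rewrite /index_iota subn0; apply: leq_sum => j _; apply: count_iota_between.
Qed.

Section AdjustmentBound.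
Variables (F : realFieldType) (v : nat -> F) (n T : nat) (L R : F).
Hypotheses (n_gt0 : (0 < n)%N) (L_gt0 : 0 < L) (L_le_R : L <= R).
Hypothesis v_range : forall g, (1 <= g <= T)%N -> L <= v g <= R.

Let R_ge0 : 0 <= R := le_trans (ltW L_gt0) L_le_R.

Definition prefix_sum x := \sum_(1 <= g < x.+1) v g.

Lemma prefix_sum_cut t Q j : is_cuts n t Q -> (j <= n)%N ->
  prefix_sum (cut Q j) = \sum_(1 <= k < j.+1) bval v Q k.
Proof.
move=> cQ; elim: j => [|j IH] jn; first by case: cQ => _ -> _ _; rewrite /prefix_sum !big_geq.
rewrite big_nat_recr // -IH; last lia.
rewrite bvalE succnK /prefix_sum (@big_cat_nat _ _ _ (cut Q j).+1) // ltnS.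
by apply: (leq_cut cQ); lia.
Qed.

Lemma prefix_sum_dist x y : (x <= T)%N -> (y <= T)%N ->
  L * `|x - y|%:R <= `|prefix_sum x - prefix_sum y|.
Proof.
wlog xy : x y / (x <= y)%N => [hw xT yT|xT yT].
  by case: (leqP x y) => [/hw|/ltnW /hw]; [apply|rewrite distnC distrC; apply].
have -> : prefix_sum y = prefix_sum x + \sum_(x.+1 <= g < y.+1) v g.
  by rewrite /prefix_sum -big_cat_nat.
have L_le_v g : (x.+1 <= g < y.+1)%N -> L <= v g.
  by move=> gr; case/andP: (@v_range g ltac:(lia)).
rewrite distnEr // opprD addNKr normrN mulr_natr -(subSS x y) -sumr_const_nat.
apply: le_trans (ler_sum_nat L_le_v) (ler_norm _).
Qed.

Lemma v_block_range t Q k g : (t <= T)%N -> is_cuts n t Q -> (k <= n)%N ->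
  g \in block Q k -> L <= v g <= R.
Proof.
move=> tT cQ kn /mem_block_cut gk; apply: v_range.
by have := cut_leq_t cQ kn; lia.
Qed.

Lemma EF1_bval_le t Q a b : (t <= T)%N -> is_cuts n t Q -> EF1 v n Q ->
  (1 <= a <= n)%N -> (1 <= b <= n)%N -> bval v Q b <= bval v Q a + R.
Proof.
move=> tT cQ efQ an bn.
have v_ge0 k g : (k <= n)%N -> g \in block Q k -> 0 <= v g.
  move=> kn /(v_block_range tT cQ kn) /andP[Lg _].
  exact: le_trans (ltW L_gt0) Lg.
case: (efQ a b an bn) => [empty|[g gb le_g]].
  rewrite /bval empty big_nil; apply: addr_ge0 => //.
  by rewrite big_seq; apply: sumr_ge0 => g; apply: v_ge0; lia.
have /andP[_ vgR] := v_block_range tT cQ (ltac:(lia) : (b <= n)%N) gb.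
by rewrite [bval v Q b](bigD1_seq g) ?iota_uniq //= addrC lerD.
Qed.

Lemma prefix_sum_cut_dev t Q j : (t <= T)%N -> is_cuts n t Q -> EF1 v n Q -> (j <= n)%N ->
  `|n%:R * prefix_sum (cut Q j) - j%:R * prefix_sum t| <= n%:R ^+ 2 * R.
Proof.
move=> tT cQ efQ jn; have [_ _ cn _] := cQ.
rewrite (prefix_sum_cut cQ jn) -[in prefix_sum t]cn (prefix_sum_cut cQ (leqnn n)).
set b := bval v Q.
have -> : n%:R * \sum_(1 <= k < j.+1) b k - j%:R * \sum_(1 <= l < n.+1) b l =
          \sum_(1 <= l < n.+1) \sum_(1 <= k < j.+1) (b k - b l).
  under [RHS]eq_bigr do rewrite sumrB sumr_const_nat.
  by rewrite sumrB sumr_const_nat sumrMnl !subn1 !mulr_natl.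
have dist_b k l : (1 <= k <= j)%N -> (1 <= l <= n)%N -> `|b k - b l| <= R.
  move=> kj ln; have := EF1_bval_le tT cQ efQ (a := k) (b := l) ltac:(lia) ltac:(lia).
  have := EF1_bval_le tT cQ efQ (a := l) (b := k) ltac:(lia) ltac:(lia).
  by rewrite ler_norml /b; lra.
apply: le_trans (ler_norm_sum _ _ _) _.
apply: le_trans (ler_sum_nat (fun l ln => ler_norm_sum _ _ _)) _.
apply: le_trans (_ : \sum_(1 <= l < n.+1) \sum_(1 <= k < j.+1) R <= _).
  by do 2![apply: ler_sum_nat => ? ?]; apply: dist_b; lia.
rewrite !sumr_const_nat !subn1 -mulrnA -[R *+ _]mulr_natl -natrX ler_wpM2r ?ler_nat //.
by rewrite expnS expn1 leq_mul2r jn orbT.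
Qed.

(* [l_j] tracks the [j/n]-quantile of the total value, which grows by at most [R]
   per round. *)
Lemma cut_dist_le t Q Q' j : (t < T)%N -> is_cuts n t Q -> EF1 v n Q ->
  is_cuts n t.+1 Q' -> EF1 v n Q' -> (j <= n)%N ->
  L * `|cut Q j - cut Q' j|%:R <= 3%:R * n%:R * R.
Proof.
move=> tT cQ efQ cQ' efQ' jn.
have xT := leq_trans (cut_leq_t cQ jn) (ltnW tT).
have yT := leq_trans (cut_leq_t cQ' jn) tT.
apply: le_trans (prefix_sum_dist xT yT) _.
have dQ := prefix_sum_cut_dev (ltnW tT) cQ efQ jn.
have dQ' := prefix_sum_cut_dev tT cQ' efQ' jn.
rewrite (_ : prefix_sum t.+1 = prefix_sum t + v t.+1) in dQ'; last first.
  by rewrite /prefix_sum big_nat_recr.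
have /andP[Lv vR] := @v_range t.+1 ltac:(lia).
have v_ge0 : 0 <= v t.+1 := le_trans (ltW L_gt0) Lv.
have jvR : 0 <= j%:R * v t.+1 <= n%:R ^+ 2 * R.
  rewrite mulr_ge0 ?ler0n //=; apply: le_trans (_ : n%:R * R <= _).
    by apply: ler_pM; rewrite ?ler0n ?ler_nat.
  by rewrite expr2 -mulrA ler_peMl ?ler1n ?mulr_ge0 ?ler0n.
rewrite -(ler_pM2l (_ : 0 < n%:R :> F)) ?ltr0n // -normr_nat -normrM normr_nat.
move: dQ dQ' jvR; rewrite !ler_norml.
set x := prefix_sum _; set y := prefix_sum _; set s := prefix_sum t.
lra.
Qed.

Lemma owner_changes_bound t Q Q' : (t < T)%N -> is_cuts n t Q -> EF1 v n Q ->
  is_cuts n t.+1 Q' -> EF1 v n Q' ->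
  L * (count (fun g => owner Q g != owner Q' g) (iota 1 t))%:R <= 6%:R * n%:R ^+ 2 * R.
Proof.
move=> tT cQ efQ cQ' efQ'.
have [szQ _ _ _] := cQ; have [szQ' _ _ _] := cQ'.
apply: le_trans (ler_wpM2l (ltW L_gt0) (_ : _ <= (\sum_(0 <= j < n.+1) `|cut Q j - cut Q' j|)%:R)) _.
  by rewrite ler_nat owner_changes_le_cut_dist.
rewrite natr_sum mulr_sumr.
apply: le_trans (_ : \sum_(0 <= j < n.+1) (3%:R * n%:R * R) <= _).
  by apply: ler_sum_nat => j /andP[_ jn]; apply: (cut_dist_le tT cQ efQ cQ' efQ').
rewrite sumr_const_nat subn0 -mulr_natl.
have n1 : n.+1%:R <= 2%:R * n%:R :> F by rewrite -natrM ler_nat; lia.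
have nR : 0 <= n%:R * R by rewrite mulr_ge0 ?ler0n.
nra.
Qed.

Lemma adjustments_bound (A : nat -> seq nat) :
  (forall t, (1 <= t <= T)%N -> is_cuts n t (A t) /\ EF1 v n (A t)) ->
  (adjustments T A)%:R <= 6%:R * (R / L) * (n ^ 2 * T)%:R.
Proof.
move=> A_EF1.
have per_round : L * (adjustments T A)%:R <= \sum_(1 <= t < T) (6%:R * n%:R ^+ 2 * R).
  rewrite /adjustments natr_sum mulr_sumr; apply: ler_sum_nat => t tr.
  have [cA efA] := A_EF1 t ltac:(lia); have [cA' efA'] := A_EF1 t.+1 ltac:(lia).
  by apply: owner_changes_bound => //; lia.
have -> : 6%:R * (R / L) * (n ^ 2 * T)%:R = 6%:R * n%:R ^+ 2 * R * T%:R / L.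
  by rewrite natrM natrX; field; rewrite gt_eqF.
rewrite ler_pdivlMr // mulrC (le_trans per_round) // sumr_const_nat -[_ *+ _]mulr_natr.
by rewrite ler_wpM2l ?ler_nat ?leq_subr // !mulr_ge0 ?exprn_ge0 ?ler0n.
Qed.

End AdjustmentBound.

Theorem mainTheorem6 :
  exists C : nat,
  forall (F : realType) (n T : nat) (v : nat -> F) (L R : F),
    (0 < n)%N -> 0 < L -> L <= R ->
    (forall g, (1 <= g <= T)%N -> L <= v g <= R) ->
    forall (P : nat -> seq nat) (i : nat -> nat),
      (forall t, (1 <= t <= T)%N -> is_leximin2 v n t (P t)) ->
      (forall t, (1 <= t <= T)%N -> is_min_agent v n (P t) (i t)) ->
      let A := fun t => alg3 v n t (P t) (i t) in
      (forall t, (1 <= t <= T)%N -> is_cuts n t (A t) /\ EF1 v n (A t)) /\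
      (adjustments T A)%:R <= C%:R * (R / L) * (n ^ 2 * T)%:R.
Proof.
exists 6%N => F n T v L R n_gt0 L_gt0 L_le_R v_range P i P_leximin i_min A.
have A_EF1 t : (1 <= t <= T)%N -> is_cuts n t (A t) /\ EF1 v n (A t).
  move=> tT; apply: alg3_EF1 (P_leximin t tT) (i_min t tT) _ => g gt.
  by case/andP: (@v_range g ltac:(lia)) => Lg _; apply: lt_le_trans L_gt0 Lg.
by split => //; apply: (adjustments_bound n_gt0 L_gt0 L_le_R v_range).
Qed.
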